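(* For every $n>0$: (1) $L_{\mathrm{RCC5}}(\mathcal{RS}^5)=L^{\mathrm S}_{\mathrm{RCC5}}(\mathcal{TOP})=L^{\mathrm S}_{\mathrm{RCC5}}(\mathbb R^n,\mathbb R^n_{\mathrm{reg}})$; (2) $L^{\mathrm{fin}}_{\mathrm{RCC5}}(\mathcal{RS}^5)=L^{\mathrm{fin}}_{\mathrm{RCC5}}(\mathcal{TOP})=L^{\mathrm{fin}}_{\mathrm{RCC5}}(\mathbb R^n,\mathbb R^n_{\mathrm{reg}})$.
   Context: Topology: interior $\mathbb I$, closure $\mathbb C$; regular closed: $\mathbb C\mathbb I(s)=s$; $\mathfrak T_{\mathrm{reg}}$ non-empty regular closed subsets; $\mathbb R^n$ Euclidean. Concrete RCC5-structure $\mathfrak R^5(\mathfrak T,U)$: domain $U$ (set of non-empty regular closed sets), relations $\mathrm{eq}$ ($s=t$), $\mathrm{po}$ ($\mathbb Is\cap\mathbb It\ne\emptyset$, $s\not\subseteq t$, $t\not\subseteq s$), $\mathrm{dr}$ ($\mathbb Is\cap\mathbb It=\emptyset$), $\mathrm{pp}$ ($s\subseteq t$, $s\ne t$), $\mathrm{ppi}$ (inverse of $\mathrm{pp}$). $\mathcal{TOP}$ here is the class of all $\mathfrak R^5(\mathfrak T,\mathfrak T_{\mathrm{reg}})$. $\mathcal{RS}^5$ is the class of general RCC5-structures: non-empty $W$ with five mutually disjoint jointly exhaustive relations $\mathrm{dr},\mathrm{eq},\mathrm{pp},\mathrm{ppi},\mathrm{po}$, $\mathrm{eq}$ identity, $\mathrm{po},\mathrm{dr}$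 symmetric, $\mathrm{pp}$ inverse of $\mathrm{ppi}$, satisfying the standard RCC5 composition table. $\mathcal L_{\mathrm{RCC5}}$: modal language with propositional variables, $\neg,\wedge$ and a box $[r]$ per RCC5 relation. $L_{\mathrm{RCC5}}(\mathcal S)$: formulas valid in all models on members of $\mathcal S$; $L^{\mathrm S}_{\mathrm{RCC5}}(\mathcal S)$: valid in all substructures of members; $L^{\mathrm{fin}}_{\mathrm{RCC5}}(\mathcal S)$: valid in all finite substructures of members. *)

From HB Require Import structures.
From mathcomp Require Import all_boot all_order all_algebra.
From mathcomp Require Import all_classical all_reals all_analysis.
From Stdlib Require Import List.
Import numFieldNormedType.Exports.

Set Implicit Arguments.
Unset Strict Implicit.
Unset Printing Implicit Defensive.

Local Open Scope classical_set_scope.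

Inductive rcc5 := DR | EQ | PP | PPI | PO.

Inductive form :=
| Var : nat -> form
| Neg : form -> form
| And : form -> form -> form
| Box : rcc5 -> form -> form.

Record frame := Frame {
  carrier : Type;
  frel : rcc5 -> carrier -> carrier -> Prop }.

Fixpoint sat (F : frame) (V : nat -> carrier F -> Prop) (w : carrier F) (phi : form)
  : Prop :=
  match phi with
  | Var p => V p w
  | Neg psi => ~ sat V w psi
  | And psi chi => sat V w psi /\ sat V w chi
  | Box r psi => forall v, @frel F r w v -> sat V v psi
  end.

Definition valid (F : frame) (phi : form) : Prop :=
  forall (V : nat -> carrier F -> Prop) (w : carrier F), sat V w phi.

(** The standard RCC5 composition table: possible r3 with x r1 y, y r2 z => x r3 z. *)
Definition all_rel : list rcc5 := [:: DR; EQ; PP; PPI; PO].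

Definition comp (r1 r2 : rcc5) : list rcc5 :=
  match r1, r2 with
  | EQ, r => [:: r]
  | r, EQ => [:: r]
  | DR, DR => all_rel
  | DR, PO => [:: DR; PO; PP]
  | DR, PP => [:: DR; PO; PP]
  | DR, PPI => [:: DR]
  | PO, DR => [:: DR; PO; PPI]
  | PO, PO => all_rel
  | PO, PP => [:: PO; PP]
  | PO, PPI => [:: DR; PO; PPI]
  | PP, DR => [:: DR]
  | PP, PO => [:: DR; PO; PP]
  | PP, PP => [:: PP]
  | PP, PPI => all_rel
  | PPI, DR => [:: DR; PO; PPI]
  | PPI, PO => [:: PO; PPI]
  | PPI, PP => [:: EQ; PO; PP; PPI]
  | PPI, PPI => [:: PPI]
  end.

Definition is_RS5 (F : frame) : Prop :=
  inhabited (carrier F) /\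
  (forall r1 r2 x y, r1 <> r2 -> @frel F r1 x y -> @frel F r2 x y -> False) /\
  (forall x y, exists r, @frel F r x y) /\
  (forall x y, @frel F EQ x y <-> x = y) /\
  (forall x y, @frel F PO x y -> @frel F PO y x) /\
  (forall x y, @frel F DR x y -> @frel F DR y x) /\
  (forall x y, @frel F PP x y <-> @frel F PPI y x) /\
  (forall r1 r2 x y z, @frel F r1 x y -> @frel F r2 y z ->
      exists2 r3, List.In r3 (comp r1 r2) & @frel F r3 x z).

Definition subframe (F : frame) (S : set (carrier F)) : frame :=
  @Frame {x : carrier F | S x}
         (fun r x y => @frel F r (proj1_sig x) (proj1_sig y)).

Definition valid_sub (F : frame) (phi : form) : Prop :=
  forall S : set (carrier F), S !=set0 -> valid (subframe S) phi.

Definition valid_finsub (F : frame) (phi : form) : Prop :=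
  forall S : set (carrier F), S !=set0 -> finite_set S -> valid (subframe S) phi.

Definition regular_closed (T : topologicalType) (s : set T) : Prop :=
  closure (interior s) = s.

Definition treg (T : topologicalType) : Type :=
  {s : set T | regular_closed s /\ s !=set0}.

Definition conc_rel (T : topologicalType) (r : rcc5) (a b : treg T) : Prop :=
  let s := proj1_sig a in
  let t := proj1_sig b in
  match r with
  | EQ => s = t
  | PO => interior s `&` interior t !=set0 /\ ~ (s `<=` t) /\ ~ (t `<=` s)
  | DR => interior s `&` interior t = set0
  | PP => s `<=` t /\ s <> t
  | PPI => t `<=` s /\ s <> t
  end.

Definition conc_frame (T : topologicalType) : frame := @Frame (treg T) (@conc_rel T).

Definition L_RS5 (phi : form) : Prop := forall F, is_RS5 F -> valid F phi.
Definition Lfin_RS5 (phi : form) : Prop := forall F, is_RS5 F -> valid_finsub F phi.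

Definition LS_TOP (phi : form) : Prop :=
  forall T : topologicalType, valid_sub (conc_frame T) phi.
Definition Lfin_TOP (phi : form) : Prop :=
  forall T : topologicalType, valid_finsub (conc_frame T) phi.

Definition LS_Rn (R : realType) (n : nat) (phi : form) : Prop :=
  valid_sub (conc_frame 'rV[R]_n) phi.
Definition Lfin_Rn (R : realType) (n : nat) (phi : form) : Prop :=
  valid_finsub (conc_frame 'rV[R]_n) phi.

(* The relations of an RCC5-structure are determined by its parthood order
   (x is part of y iff x eq y or x pp y) and its overlap relation (not dr),
   and any partial order together with a reflexive, symmetric overlap relation
   that is monotone in the order satisfies the RCC5 axioms.  Regular
   closed sets under inclusion and meeting of interiors form such a pair, and the
   axioms pass to substructures, so the logic of RS^5 is contained in the
   topological logics.
   Conversely, a formula refuted at w in an RCC5-structure stays refuted in the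
   substructure obtained by closing {w} under witnesses of failed boxes, and this
   substructure is countable; finite substructures are countable anyway.  A
   countable RCC5-structure embeds into the regular closed subsets of R^n: give
   every point z and every po-pair (z1, z2) its own open ball, all these balls
   pairwise disjoint, and send x to the closure of the union of the balls of the
   points below x and of the po-pairs with a member below x.  Inclusion of these
   regions is parthood, and their interiors meet exactly when the points are
   not dr, the po-pair balls providing the common interior points of
   po-related regions. *)

From Pilot Require Import Defs.
From HB Require Import structures.
From mathcomp Require Import all_boot all_order all_algebra.
From mathcomp Require Import all_classical all_reals all_analysis.
From mathcomp Require Import lra.
Import Defs.
Import numFieldNormedType.Exports.
Import GRing.Theory Num.Theory.

Set Implicit Arguments.
Unset Strict Implicit.
Unset Printing Implicit Defensive.

Local Open Scope classical_set_scope.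

(* Countability of formulas makes the witness closure [witnesses] countable. *)
Definition rcc5_code (r : rcc5) : nat :=
  match r with DR => 0 | EQ => 1 | PP => 2 | PPI => 3 | PO => 4 end.

Definition rcc5_decode (k : nat) : option rcc5 :=
  nth None [:: Some DR; Some EQ; Some PP; Some PPI; Some PO] k.

Lemma rcc5_codeK : pcancel rcc5_code rcc5_decode. Proof. by case. Qed.

HB.instance Definition _ := Countable.copy rcc5 (pcan_type rcc5_codeK).

Fixpoint form_tree (phi : form) : GenTree.tree (nat + rcc5) :=
  match phi with
  | Var p => GenTree.Leaf (inl p)
  | Neg psi => GenTree.Node 0 [:: form_tree psi]
  | And psi chi => GenTree.Node 1 [:: form_tree psi; form_tree chi]
  | Box r psi => GenTree.Node 2 [:: GenTree.Leaf (inr r); form_tree psi]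
  end.

Fixpoint tree_form (t : GenTree.tree (nat + rcc5)) : option form :=
  match t with
  | GenTree.Leaf (inl p) => Some (Var p)
  | GenTree.Node 0 [:: t1] => omap Neg (tree_form t1)
  | GenTree.Node 1 [:: t1; t2] =>
      if tree_form t1 is Some psi then omap (And psi) (tree_form t2) else None
  | GenTree.Node 2 [:: GenTree.Leaf (inr r); t1] => omap (Box r) (tree_form t1)
  | _ => None
  end.

Lemma form_treeK : pcancel form_tree tree_form.
Proof. by elim=> //= [psi -> | psi -> chi -> | r psi ->]. Qed.

HB.instance Definition _ := Countable.copy form (pcan_type form_treeK).

(* [is_RS5] without non-emptiness, so that it passes to every substructure. *)
Record RS5_axioms (F : frame) : Prop := {
  rel_disjoint : forall r1 r2 x y,
    r1 <> r2 -> @frel F r1 x y -> @frel F r2 x y -> False;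
  rel_total : forall x y, exists r, @frel F r x y;
  EQ_eq : forall x y, @frel F EQ x y <-> x = y;
  PO_sym : forall x y, @frel F PO x y -> @frel F PO y x;
  DR_sym : forall x y, @frel F DR x y -> @frel F DR y x;
  PP_PPI : forall x y, @frel F PP x y <-> @frel F PPI y x;
  rel_comp : forall r1 r2 x y z, @frel F r1 x y -> @frel F r2 y z ->
    exists2 r3, List.In r3 (comp r1 r2) & @frel F r3 x z }.

Lemma is_RS5E (F : frame) : is_RS5 F <-> inhabited (carrier F) /\ RS5_axioms F.
Proof. by rewrite /is_RS5; split=> [|[? []]]; intuition. Qed.

Lemma RS5_axioms_subframe (F : frame) (S : set (carrier F)) :
  RS5_axioms F -> RS5_axioms (subframe S).
Proof.
case=> disj total eq_EQ sym_PO sym_DR PP_PPI comp3.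
split=> [r1 r2 [x ?] [y ?]|[x ?] [y ?]|[x ?] [y ?]|[x ?] [y ?]|[x ?] [y ?]|
         [x ?] [y ?]|r1 r2 [x ?] [y ?] [z ?]] /=; try by eauto.
by rewrite eq_EQ; split=> [xy|[]//]; apply: eq_exist.
Qed.

Definition mereo_rel {X : Type} (sub ov : X -> X -> Prop) (r : rcc5) (a b : X) : Prop :=
  match r with
  | EQ => a = b
  | PO => ov a b /\ ~ sub a b /\ ~ sub b a
  | DR => ~ ov a b
  | PP => sub a b /\ a <> b
  | PPI => sub b a /\ a <> b
  end.

Section MereologicalFrames.
Variables (X : Type) (sub ov : X -> X -> Prop).
Hypothesis sub_refl : forall a, sub a a.
Hypothesis sub_trans : forall a b c, sub a b -> sub b c -> sub a c.
Hypothesis sub_anti : forall a b, sub a b -> sub b a -> a = b.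
Hypothesis ov_sym : forall a b, ov a b -> ov b a.
Hypothesis ov_refl : forall a, ov a a.
Hypothesis ov_sub : forall a b c, sub a b -> ov c a -> ov c b.

Let ov_subl a b c : sub a b -> ov a c -> ov b c.
Proof. by move=> ab ac; apply: ov_sym; apply: ov_sub ab _; apply: ov_sym. Qed.

Let sub_ov a b : sub a b -> ov a b.
Proof. by move=> ab; apply: ov_sub ab (ov_refl a). Qed.

Lemma mereo_rel_total a b : exists r, mereo_rel sub ov r a b.
Proof.
have [ab|] := pselect (ov a b); last by exists DR.
have [<-|neq] := pselect (a = b); first by exists EQ.
have [|nab] := pselect (sub a b); first by exists PP.
have [|nba] := pselect (sub b a); first by exists PPI.
by exists PO.
Qed.

Ltac mereo_contradiction :=
  repeat match goal with H : _ /\ _ |- _ => case: H => ? ? end; subst;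
  match goal with H : ~ _ |- _ =>
    apply: H; by eauto
  end.

Lemma mereo_rel_disjoint r1 r2 a b :
  r1 <> r2 -> mereo_rel sub ov r1 a b -> mereo_rel sub ov r2 a b -> False.
Proof. by case: r1; case: r2 => //= _ h1 h2; mereo_contradiction. Qed.

Lemma mereo_rel_comp r1 r2 a b c :
  mereo_rel sub ov r1 a b -> mereo_rel sub ov r2 b c ->
  exists2 r3, List.In r3 (comp r1 r2) & mereo_rel sub ov r3 a c.
Proof.
move=> h1 h2; have [r3 h3] := mereo_rel_total a c; exists r3 => //.
case: r1 h1; case: r2 h2; case: r3 h3 => /= h3 h2 h1; try tauto; exfalso;
  mereo_contradiction.
Qed.

Lemma RS5_axioms_mereo : RS5_axioms (Frame (mereo_rel sub ov)).
Proof.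
split=> //=.
- exact: mereo_rel_disjoint.
- exact: mereo_rel_total.
- by move=> a b [? [? ?]]; split; [exact: ov_sym | split].
- by move=> a b nab /ov_sym.
- by move=> a b; split=> -[? ?]; split=> //; apply: nesym.
- exact: mereo_rel_comp.
Qed.

End MereologicalFrames.

Lemma mereo_rel_embed (X Y : Type) (e : X -> Y) (sub ov : X -> X -> Prop)
    (sub' ov' : Y -> Y -> Prop) :
  (forall x y, sub' (e x) (e y) <-> sub x y) ->
  (forall x y, ov' (e x) (e y) <-> ov x y) -> injective e ->
  forall r x y, mereo_rel sub' ov' r (e x) (e y) <-> mereo_rel sub ov r x y.
Proof.
move=> subE ovE e_inj r x y.
have eqE : e x = e y <-> x = y by split=> [/e_inj|->].
by case: r => /=; rewrite ?subE ?ovE ?eqE.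
Qed.

Section ConcreteFrames.
Variable T : topologicalType.

Definition region_sub (a b : treg T) : Prop := proj1_sig a `<=` proj1_sig b.

Definition region_ov (a b : treg T) : Prop :=
  (proj1_sig a)° `&` (proj1_sig b)° !=set0.

Lemma treg_interior_neq0 (a : treg T) : (proj1_sig a)° !=set0.
Proof.
case: a => s [s_reg [x sx]] /=; apply/set0P/negP => /eqP s0.
by move: sx; rewrite -s_reg s0 closure0.
Qed.

Lemma conc_relE : @conc_rel T = mereo_rel region_sub region_ov.
Proof.
apply/funext=> r; apply/funext=> -[s s_reg]; apply/funext=> -[t t_reg].
have eqE : (exist _ s s_reg = exist _ t t_reg :> treg T) = (s = t).
  by apply/propext; split=> [[]|st]; last exact: eq_exist.
rewrite /region_sub /region_ov; case: r => /=; apply/propext; rewrite ?eqE //.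
by rewrite -set0P; split=> [->|/negP/negPn/eqP]; first by rewrite eqxx.
Qed.

Lemma RS5_axioms_conc : RS5_axioms (conc_frame T).
Proof.
rewrite /conc_frame conc_relE; apply: RS5_axioms_mereo => [a|a b c|a b|a b|a|a b c].
- exact: subset_refl.
- exact: subset_trans.
- by case: a b => [s ?] [t ?] /= st ts; apply/eq_exist/seteqP.
- by rewrite /region_ov setIC.
- by rewrite /region_ov setIid; exact: treg_interior_neq0.
- by move=> ab [x [cx ax]]; exists x; split=> //; apply: interiorS ab _ ax.
Qed.

End ConcreteFrames.

Section RS5Frames.
Variables (F : frame) (hF : RS5_axioms F).
Local Notation W := (carrier F).
Local Notation fr := (@frel F).

Definition part_of (x y : W) : Prop := x = y \/ fr PP x y.

Definition overlaps (x y : W) : Prop := ~ fr DR x y.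

Lemma rel_unique r1 r2 x y : fr r1 x y -> fr r2 x y -> r1 = r2.
Proof. by move=> h1 h2; apply: contrapT => ne; exact: (rel_disjoint hF ne h1 h2). Qed.

Lemma EQ_refl x : fr EQ x x.
Proof. exact/(EQ_eq hF). Qed.

Lemma rel_eq_EQ r x y : fr r x y -> x = y -> r = EQ.
Proof. by move=> rxy exy; apply: rel_unique rxy _; rewrite exy; apply: EQ_refl. Qed.

Lemma PP_trans x y z : fr PP x y -> fr PP y z -> fr PP x z.
Proof. by move=> xy yz; have [r3 /= [<-|//] //] := rel_comp hF xy yz. Qed.

Lemma PP_DR_trans x y z : fr PP x y -> fr DR y z -> fr DR x z.
Proof. by move=> xy yz; have [r3 /= [<-|//] //] := rel_comp hF xy yz. Qed.

Lemma part_of_refl x : part_of x x.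
Proof. by left. Qed.

Lemma part_of_trans x y z : part_of x y -> part_of y z -> part_of x z.
Proof. by case=> [->//|xy] [<-|yz]; right=> //; apply: PP_trans xy yz. Qed.

Lemma part_of_anti x y : part_of x y -> part_of y x -> x = y.
Proof.
by case=> [//|xy] [//|yx]; move: (rel_eq_EQ (PP_trans xy yx) erefl).
Qed.

Lemma overlaps_refl x : overlaps x x.
Proof. by move/rel_eq_EQ/(_ erefl). Qed.

Lemma overlaps_sym x y : overlaps x y -> overlaps y x.
Proof. by move=> nxy /(DR_sym hF). Qed.

Lemma overlaps_part_of a b x y :
  overlaps a b -> part_of a x -> part_of b y -> overlaps x y.
Proof.
move=> nab ax by_ xy; have ay : fr DR a y by case: ax xy => [->//|]; apply: PP_DR_trans.
apply/nab/(DR_sym hF); case: by_ (DR_sym hF ay) => [->//|]; apply: PP_DR_trans.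
Qed.

Lemma RS5_relE : @frel F = mereo_rel part_of overlaps.
Proof.
apply/funext=> r; apply/funext=> x; apply/funext=> y; apply/propext.
case: r => /=.
- by rewrite /overlaps notK.
- exact: EQ_eq.
- split=> [xy|[[->|//] //]]; split; [by right | by move/(rel_eq_EQ xy)].
- rewrite -(PP_PPI hF).
  split=> [yx|[[->|//] //]]; split; [by right | by move/esym/(rel_eq_EQ yx)].
- split=> [xy|[nDR [nxy nyx]]].
  + split; [|split]; first by move=> /(rel_unique xy).
      by case=> [/(rel_eq_EQ xy)|/(rel_unique xy)].
    by case=> [/esym/(rel_eq_EQ xy)|/(PP_PPI hF)/(rel_unique xy)].
  have [[] rxy //] := rel_total hF x y; exfalso.
  + by apply: nxy; left; apply/(EQ_eq hF).
  + by apply: nxy; right.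
  + by apply: nyx; right; apply/(PP_PPI hF).
Qed.

End RS5Frames.

Lemma open_sub_closure_meet (T : topologicalType) (U A : set T) :
  open U -> U !=set0 -> U `<=` closure A -> U `&` A !=set0.
Proof.
move=> oU [x Ux] /(_ x Ux) /(_ U (open_nbhs_nbhs (conj oU Ux))).
by rewrite setIC.
Qed.

Section DisjointOpenFamily.
Variables (T : topologicalType) (I : Type) (O : I -> set T).
Hypothesis O_open : forall i, open (O i).
Hypothesis O_neq0 : forall i, O i !=set0.
Hypothesis O_disj : forall i j x, O i x -> O j x -> i = j.

Definition cl_union (P : set I) : set T := closure (\bigcup_(i in P) O i).

Lemma cl_union_regular P : regular_closed (cl_union P).
Proof. by apply: closure_open_regclosed; apply: bigcup_open. Qed.

Lemma cl_union_neq0 P i : P i -> cl_union P !=set0.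
Proof.
by move=> Pi; have [x Oix] := O_neq0 i; exists x; apply: subset_closure; exists i.
Qed.

Lemma sub_cl_union P i : P i -> O i `<=` cl_union P.
Proof. by move=> Pi x Oix; apply: subset_closure; exists i. Qed.

Lemma sub_cl_union_interior P i : P i -> O i `<=` (cl_union P)°.
Proof. by move=> Pi; rewrite -open_subsetE//; apply: sub_cl_union. Qed.

Lemma open_meet_cl_union U P : open U -> U !=set0 -> U `<=` cl_union P ->
  exists2 i, P i & U `&` O i !=set0.
Proof.
move=> oU U0 UP; have [x [Ux [i Pi Oix]]] := open_sub_closure_meet oU U0 UP.
by exists i => //; exists x.
Qed.

Lemma cl_union_subset P Q : cl_union P `<=` cl_union Q <-> P `<=` Q.
Proof.
split=> [PQ i Pi | PQ]; last by apply: closureS => x [i /PQ Qi Oix]; exists i.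
have [j Qj [x [Oix Ojx]]] :=
  open_meet_cl_union (O_open i) (O_neq0 i) (subset_trans (sub_cl_union Pi) PQ).
by rewrite (O_disj Oix Ojx).
Qed.

Lemma cl_union_interiorI P Q :
  (cl_union P)° `&` (cl_union Q)° !=set0 <-> P `&` Q !=set0.
Proof.
split=> [PQ | [i [Pi Qi]]]; last first.
  have [x Oix] := O_neq0 i.
  by exists x; split; [apply: sub_cl_union_interior Pi _ Oix |
                       apply: sub_cl_union_interior Qi _ Oix].
set U := _ `&` _ in PQ.
have oU : open U by apply: openI; apply: open_interior.
have [i Pi [x [Ux Oix]]] :=
  open_meet_cl_union oU PQ (fun y Uy => interior_subset Uy.1).
have [j Qj [y [[_ Oiy] Ojy]]] := open_meet_cl_union (openI oU (O_open i))
  (ex_intro _ x (conj Ux Oix)) (fun y Uy => interior_subset Uy.1.2).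
by exists i; split=> //; rewrite (O_disj Oiy Ojy).
Qed.

End DisjointOpenFamily.

Section LatticeBalls.
Local Open Scope ring_scope.
Variables (R : realType) (n : nat).

Definition lattice_ball (k : nat) : set 'rV[R]_n.+1 :=
  ball (const_mx k%:R : 'rV[R]_n.+1) 4^-1.

Lemma lattice_ball_open k : open (lattice_ball k).
Proof. by apply: ball_open; rewrite invr_gt0. Qed.

Lemma lattice_ball_neq0 k : lattice_ball k !=set0.
Proof. by exists (const_mx k%:R : 'rV[R]_n.+1); apply: ballxx; rewrite invr_gt0. Qed.

Lemma lattice_ball_disj i j x : lattice_ball i x -> lattice_ball j x -> i = j.
Proof.
wlog ij : i j / (i <= j)%N => [hwlog|].
  by case/orP: (leq_total i j) => ? xi xj; [|symmetry]; apply: hwlog.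
move=> [_ /(_ ord0 ord0)] + [_ /(_ ord0 ord0)]; rewrite !mxE.
rewrite /ball /= => xi xj; apply/eqP; rewrite eqn_leq ij leqNgt; apply/negP => ji.
have : i%:R + 1 <= j%:R :> R by rewrite natr1 ler_nat.
move: xi xj; rewrite !ltr_distlC; lra.
Qed.

End LatticeBalls.

Section EmbeddingIntoRn.
Variables (R : realType) (m : nat) (F : frame) (hF : RS5_axioms F).
Variables (c : carrier F -> nat) (c_inj : injective c).
Local Notation W := (carrier F).
Local Notation atom := (W + W * W)%type.

Definition atom_code (u : atom) : nat :=
  pickle (match u with inl x => inl (c x) | inr (x, y) => inr (c x, c y) end
          : nat + nat * nat).

Lemma atom_code_inj : injective atom_code.
Proof.
move=> [x|[x1 x2]] [y|[y1 y2]] /(pcan_inj pickleK) //=; first by case=> /c_inj->.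
by case=> /c_inj-> /c_inj->.
Qed.

Definition atom_ball (u : atom) : set 'rV[R]_m.+1 := @lattice_ball R m (atom_code u).

Lemma atom_ball_open u : open (atom_ball u).
Proof. exact: lattice_ball_open. Qed.

Lemma atom_ball_neq0 u : atom_ball u !=set0.
Proof. exact: lattice_ball_neq0. Qed.

Lemma atom_ball_disj u v x : atom_ball u x -> atom_ball v x -> u = v.
Proof. by move=> ux vx; apply: atom_code_inj; apply: lattice_ball_disj ux vx. Qed.

Definition atom_below (x : W) (u : atom) : Prop :=
  match u with
  | inl z => part_of z x
  | inr (z1, z2) => frel PO z1 z2 /\ (part_of z1 x \/ part_of z2 x)
  end.

Lemma atom_below_subset x y : atom_below x `<=` atom_below y <-> part_of x y.
Proof.
split=> [/(_ (inl x) (part_of_refl x))//|xy [z|[z1 z2]] /=].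
  by move=> zx; apply: (part_of_trans hF zx xy).
by case=> PO12 [z1x|z2x]; split=> //; [left|right]; apply: (part_of_trans hF) xy.
Qed.

Lemma atom_below_meet x y : atom_below x `&` atom_below y !=set0 <-> overlaps x y.
Proof.
split=> [[[z|[z1 z2]]] /= | xy].
- by move=> [zx zy]; apply: (overlaps_part_of hF _ zx zy); apply: overlaps_refl.
- case=> -[PO12 zx] [_ zy].
  have ov12 : overlaps z1 z2 by move/(rel_unique hF PO12).
  have ov21 := overlaps_sym hF ov12.
  by case: zx zy => zx [] zy; apply: (overlaps_part_of hF _ zx zy) => //;
    apply: overlaps_refl.
- have [[] rxy] := rel_total hF x y => //.
  + by move/(EQ_eq hF): rxy => <-; exists (inl x); split; apply: part_of_refl.
  + by exists (inl x); split; [apply: part_of_refl | right].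
  + by exists (inl y); split; [right; apply/(PP_PPI hF) | apply: part_of_refl].
  + by exists (inr (x, y)); split; split=> //; [left | right]; apply: part_of_refl.
Qed.

Definition embed (x : W) : treg 'rV[R]_m.+1 :=
  exist _ (cl_union atom_ball (atom_below x))
    (conj (cl_union_regular atom_ball_open _)
          (@cl_union_neq0 _ _ _ atom_ball_neq0 (atom_below x) (inl x) (part_of_refl x))).

Lemma region_sub_embed x y : region_sub (embed x) (embed y) <-> part_of x y.
Proof.
rewrite -atom_below_subset.
exact: (cl_union_subset atom_ball_open atom_ball_neq0 atom_ball_disj).
Qed.

Lemma region_ov_embed x y : region_ov (embed x) (embed y) <-> overlaps x y.
Proof.
rewrite -atom_below_meet.
exact: (cl_union_interiorI atom_ball_open atom_ball_neq0 atom_ball_disj).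
Qed.

Lemma embed_inj : injective embed.
Proof.
by move=> x y exy; apply: (part_of_anti hF); apply/region_sub_embed; rewrite exy.
Qed.

Lemma embed_rel r x y : conc_rel r (embed x) (embed y) <-> frel r x y.
Proof.
rewrite conc_relE (RS5_relE hF); apply: mereo_rel_embed.
- exact: region_sub_embed.
- exact: region_ov_embed.
- exact: embed_inj.
Qed.

End EmbeddingIntoRn.

Section Witnesses.
Variables (F : frame) (V : nat -> carrier F -> Prop) (w : carrier F).
Local Notation W := (carrier F).

Definition refuter (v : W) (r : rcc5) (psi : form) : W :=
  if pselect (exists u, frel r v u /\ ~ sat V u psi) is left h
  then proj1_sig (cid h) else v.

Lemma refuterP v r psi : (exists u, frel r v u /\ ~ sat V u psi) ->
  frel r v (refuter v r psi) /\ ~ sat V (refuter v r psi) psi.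
Proof. by rewrite /refuter; case: pselect => // h _; case: cid. Qed.

Fixpoint refuter_walk (l : seq (rcc5 * form)) : W :=
  if l is (r, psi) :: l' then refuter (refuter_walk l') r psi else w.

Definition witnesses : set W := [set x | exists l, refuter_walk l = x].

Lemma witnesses_root : witnesses w.
Proof. by exists [::]. Qed.

Lemma sat_witnesses psi (x : {y | witnesses y}) :
  sat (F := subframe witnesses) (fun p y => V p (proj1_sig y)) x psi <->
  sat V (proj1_sig x) psi.
Proof.
elim: psi x => [p|psi IH|psi IHpsi chi IHchi|r psi IH] x //=.
- by rewrite IH.
- by rewrite IHpsi IHchi.
split=> [box_sub | box v rxv]; last by apply/IH; apply: box.
case: x box_sub => x [l xl] box_sub /=; apply: contrapT.
move=> /existsNP[u /not_implyP[]]; rewrite -xl => rlu nu.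
have [rlr nr] := refuterP (ex_intro _ u (conj rlu nu)).
apply/nr/(IH (exist _ _ (ex_intro _ ((r, psi) :: l) erefl))).
by apply: box_sub; rewrite /= -{1}xl.
Qed.

Definition witness_code (x : {y | witnesses y}) : nat :=
  pickle (proj1_sig (cid (proj2_sig x))).

Lemma witness_code_inj : injective witness_code.
Proof.
move=> [x wx] [y wy] /(pcan_inj pickleK) /= lxy; apply: eq_exist.
by rewrite -(proj2_sig (cid wx)) -(proj2_sig (cid wy)) lxy.
Qed.

End Witnesses.

Lemma sat_iso (F G : frame) (h : carrier F -> carrier G) :
  (forall y, exists x, h x = y) -> injective h ->
  (forall r x y, frel r (h x) (h y) <-> frel r x y) ->
  forall V phi x, sat (fun p y => forall x, h x = y -> V p x) (h x) phi <-> sat V x phi.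
Proof.
move=> h_surj h_inj hE V; elim=> [p|psi IH|psi IHpsi chi IHchi|r psi IH] x /=.
- by split=> [/(_ x erefl) | Vx x' /h_inj ->].
- by rewrite IH.
- by rewrite IHpsi IHchi.
split=> [box v /hE rxv | box v']; first by apply/IH; apply: box.
by have [v <-] := h_surj v'; move=> /hE rxv; apply/IH; apply: box.
Qed.

Lemma valid_of_range (F G : frame) (h : carrier F -> carrier G) :
  injective h -> (forall r x y, frel r (h x) (h y) <-> frel r x y) ->
  forall phi, valid (subframe (range h)) phi -> valid F phi.
Proof.
move=> h_inj hE phi valid_range V x.
pose h' x : {y | range h y} := exist _ (h x) (imageT h x).
apply/(@sat_iso F (subframe (range h)) h'); last exact: valid_range.
- by case=> y [x' ? hx']; exists x'; apply: eq_exist.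
- by move=> x1 x2 [/h_inj].
- exact: hE.
Qed.

Lemma finite_range_sig (T U : Type) (S : set T) (f : {x | S x} -> U) :
  finite_set S -> finite_set (range f).
Proof.
move=> finS; have [->|/set0P[u0 _]] := eqVneq (range f) set0; first exact: finite_set0.
pose g x := if pselect (S x) is left Sx then f (exist _ x Sx) else u0.
apply: sub_finite_set (finite_image g finS) => _ [[x Sx] _ <-].
by exists x => //; rewrite /g; case: pselect => // Sx'; congr f; apply: eq_exist.
Qed.

Lemma valid_of_embed_range (R : realType) m (F : frame) (hF : RS5_axioms F)
    (c : carrier F -> nat) (c_inj : injective c) phi :
  valid (@subframe (conc_frame 'rV[R]_m.+1) (range (embed R m c))) phi -> valid F phi.
Proof.
exact: (valid_of_range (G := conc_frame 'rV[R]_m.+1)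
  (embed_inj (R := R) (m := m) hF c_inj) (embed_rel R m hF c_inj)).
Qed.

Lemma L_RS5_LS_TOP phi : L_RS5 phi -> LS_TOP phi.
Proof.
move=> valid_RS5 T S [x Sx]; apply: valid_RS5; apply/is_RS5E.
by split; [exact: inhabits (exist _ x Sx) | apply/RS5_axioms_subframe/RS5_axioms_conc].
Qed.

Lemma Lfin_RS5_Lfin_TOP phi : Lfin_RS5 phi -> Lfin_TOP phi.
Proof.
move=> valid_RS5 T S [x Sx] finS; apply: valid_RS5 => //; last by exists x.
by apply/is_RS5E; split; [exact: inhabits x | exact: RS5_axioms_conc].
Qed.

Lemma LS_Rn_L_RS5 (R : realType) m phi : LS_Rn R m.+1 phi -> L_RS5 phi.
Proof.
move=> valid_Rn F /is_RS5E[_ hF] V w; apply: contrapT => refuted.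
pose W := exist _ w (witnesses_root V w).
have hW := RS5_axioms_subframe (witnesses V w) hF.
apply/refuted/(sat_witnesses phi W).
apply/(valid_of_embed_range (R := R) (m := m) hW (@witness_code_inj F V w))/valid_Rn.
by eexists; exists W.
Qed.

Lemma Lfin_Rn_Lfin_RS5 (R : realType) m phi : Lfin_Rn R m.+1 phi -> Lfin_RS5 phi.
Proof.
move=> valid_Rn F /is_RS5E[_ hF] S [x Sx] finS.
have /pcard_injP[f f_inj] := finite_set_countable finS.
have c_inj : injective (f \o @proj1_sig _ S).
  move=> [y Sy] [z Sz] /= fyz; apply: eq_exist.
  exact: f_inj (mem_set Sy) (mem_set Sz) fyz.
have hS := RS5_axioms_subframe S hF.
apply: (valid_of_embed_range (R := R) (m := m) hS c_inj); apply: valid_Rn; last first.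
  exact: finite_range_sig.
by eexists; exists (exist _ x Sx).
Qed.

Theorem theorem8p2 (R : realType) (n : nat) (hn : (0 < n)%N) :
  ((forall phi, L_RS5 phi <-> LS_TOP phi) /\
   (forall phi, LS_TOP phi <-> LS_Rn R n phi)) /\
  ((forall phi, Lfin_RS5 phi <-> Lfin_TOP phi) /\
   (forall phi, Lfin_TOP phi <-> Lfin_Rn R n phi)).
Proof.
case: n hn => // m _.
have LS_TOP_LS_Rn phi : LS_TOP phi -> LS_Rn R m.+1 phi by apply.
have Lfin_TOP_Lfin_Rn phi : Lfin_TOP phi -> Lfin_Rn R m.+1 phi by apply.
split; split=> phi; split.
- exact: L_RS5_LS_TOP.
- by move/LS_TOP_LS_Rn/LS_Rn_L_RS5.
- exact: LS_TOP_LS_Rn.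
- by move/LS_Rn_L_RS5/L_RS5_LS_TOP.
- exact: Lfin_RS5_Lfin_TOP.
- by move/Lfin_TOP_Lfin_Rn/Lfin_Rn_Lfin_RS5.
- exact: Lfin_TOP_Lfin_Rn.
- by move/Lfin_Rn_Lfin_RS5/Lfin_RS5_Lfin_TOP.
Qed.
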